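(* Let $G=(V,E)$ be a connected graph, let $T$ be a spanning tree of $G$ rooted at $s$ which is an $\mathcal L$-tree of some DFS on $G$, and let $\rho$ be an arbitrary vertex order of $V$ ending in $s$. Let $\sigma$ be the order output by Ordering$(G,T,s,\rho)$. Then $T$ is an $\mathcal L$-tree of LexDFS rooted in $s$ if and only if $\sigma$ is a LexDFS order of $G$.
   Context: Graphs are finite, simple, undirected; $n=|V|$, $N(v)$ is the neighborhood of $v$. A vertex order is a linear order $\sigma=(v_1,\dots,v_n)$ of $V$; $\sigma(i)=v_i$; $u\prec_\sigma v$ means $u$ appears before $v$; $\sigma^-$ is the reverse order. DFS: a search that starts at a vertex and repeatedly visits an unvisited neighbor of the most recently visited vertex that still has an unvisited neighbor; a DFS order is any resulting order. DFS$^+(\tau)$ on a graph $H$: the DFS of $H$ starting at the last vertex of $\tau$ that, whenever several vertices may be visited next, visits the one rightmost in $\tau$. LexDFS started at $s$: label $s$ with $(0)$, all others with the empty label; for $i=1,\dots,n$ pick an unnumbered vertex $v$ with lexicographically largest label, set $\sigma(i)=v$, and prepend $i$ to the label of each unnumbered neighbor of $v$; a LexDFS order is any possible output. $\mathcal L$-tree of a vertex order $(v_1,\dots,v_n)$ of a connected graph: the spanning tree rooted at $v_1$ with an edge from each $v_i$ ($i>1$) to its rightmost neighbor $v_j$ with $j<i$. A rooted spanning tree $T$ (root $s$) is an $\mathcal L$-tree of a search $\mathcal P$ on $G$ if some $\mathcal P$-order of $G$ starting at $s$ has $\mathcal L$-tree $T$ (same edges and same root). Partition refinement: refining an ordered partition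 $(Q_1,\dots,Q_k)$ of $V$ with $S'\subseteq V$ replaces each $Q_i$ by $(Q_i\cap S',\,Q_i\setminus S')$ whenever both are nonempty. Procedure Ordering$(G,T,s,\rho)$: let $\beta$ be the reverse of a BFS order of $T$ starting at $s$; set $\mathcal Q=(V)$; for $i=1,\dots,n$, with $v=\beta(i)$, refine $\mathcal Q$ with $\{w\in N(v): w\prec_\beta v\}$; then order the vertices inside each class of $\mathcal Q$ according to $\rho^-$ and move the class $\{s\}$ to the leftmost position; let $\tau$ be the reverse of the resulting order of all vertices; output $\sigma=$ DFS$^+(\tau)$ on $T$. *)

(* Graphs: a finite type T of vertices with an edge relation
   e : rel T (symmetric, irreflexive). Vertex orders are sequences that are
   permutations of enum T. *)
From mathcomp Require Import all_boot.
Set Implicit Arguments. Unset Strict Implicit. Unset Printing Implicit Defensive.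

Section Defs.
Variable T : finType.

Definition vorder (s : seq T) : Prop := perm_eq s (enum T).

Definition spanning_tree (e t : rel T) : Prop :=
  subrel t e /\ symmetric t /\ (forall x y, connect t x y) /\
  #|[set p : T * T | t p.1 p.2]| = (#|T|).-1.*2.

Definition active (e : rel T) (p : seq T) : seq T :=
  [seq u <- p | [exists w, e u w && (w \notin p)]].

Definition dfs_order (e : rel T) (sigma : seq T) : Prop :=
  vorder sigma /\
  forall p v q, sigma = p ++ v :: q ->
    active e p != [::] -> e (last v (active e p)) v.

Definition bfs_order (e : rel T) (sigma : seq T) : Prop :=
  vorder sigma /\
  forall p v q, sigma = p ++ v :: q ->
    active e p != [::] -> e (head v (active e p)) v.

Fixpoint lexle (a b : seq nat) : bool :=
  match a, b with
  | [::], _ => true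
  | _ :: _, [::] => false
  | x :: a', y :: b' => (x < y) || ((x == y) && lexle a' b')
  end.

(* LexDFS label of w after the vertices of p have been numbered 1..size p
   (numbers prepended, so most recent first), for the search started at s *)
Definition lexlabel (e : rel T) (s : T) (p : seq T) (w : T) : seq nat :=
  [seq i.+1 | i <- rev (iota 0 (size p)) & e (nth w p i) w]
  ++ (if w == s then [:: 0] else [::]).

Definition lexdfs_from (e : rel T) (s : T) (sigma : seq T) : Prop :=
  vorder sigma /\
  forall p v q, sigma = p ++ v :: q ->
    forall w, w \in q -> lexle (lexlabel e s p w) (lexlabel e s p v).

Definition lexdfs_order (e : rel T) (sigma : seq T) : Prop :=
  exists s, lexdfs_from e s sigma.

Definition lparent (e : rel T) (sigma : seq T) (x y : T) : bool :=
  let P := [seq u <- take (index y sigma) sigma | e u y] in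
  (P != [::]) && (x == last x P).

Definition ltree (e : rel T) (sigma : seq T) : rel T :=
  fun x y => lparent e sigma x y || lparent e sigma y x.

Definition Ltree_of_dfs (e t : rel T) (s : T) : Prop :=
  exists sigma, [/\ dfs_order e sigma, head s sigma = s & t =2 ltree e sigma].

Definition Ltree_of_lexdfs (e t : rel T) (s : T) : Prop :=
  exists sigma, lexdfs_from e s sigma /\ t =2 ltree e sigma.

Definition refine (Q : seq {set T}) (S : {set T}) : seq {set T} :=
  flatten [seq if (A :&: S != set0) && (A :\: S != set0)
               then [:: A :&: S; A :\: S] else [:: A] | A <- Q].

(* DFS^+(tau) on the graph t: starts at the last vertex of tau; among the
   possible next vertices, the one rightmost in tau is chosen *)
Definition dfs_plus_step (t : rel T) (tau vis : seq T) : seq T :=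
  let cands u := [seq w <- tau | t u w & w \notin vis] in
  match [seq u <- rev vis | cands u != [::]] with
  | u :: _ => rcons vis (last u (cands u))
  | [::] => vis
  end.

Definition dfs_plus (t : rel T) (tau : seq T) : seq T :=
  match tau with
  | [::] => [::]
  | x :: r => iter (#|T|).-1 (dfs_plus_step t tau) [:: last x r]
  end.

(* Procedure Ordering(G,T,s,rho), where beta is the reverse of the chosen
   BFS order of T from s *)
Definition ordering (e t : rel T) (s : T) (rho beta : seq T) : seq T :=
  let Q := foldl (fun Q v =>
             refine Q [set w | e v w & index w beta < index v beta])
             [:: [set: T]] beta in
  let Q' := [set s] :: [seq A <- Q | A != [set s]] in
  let ord := flatten [seq [seq x <- rev rho | x \in A] | A : {set T} <- Q'] in
  dfs_plus t (rev ord).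

End Defs.

(* Let [sdfs] be a DFS order with L-tree [t]; then [t] is a normal tree: every
   edge of G joins a vertex to one of its ancestors.  Consequently any order
   that grows [t] from [s] has L-tree [t], and in an order produced by DFS^+
   on [t] the LexDFS labels of the next vertex [v] and of an unvisited [w] can
   differ only at ancestors of the parent [u] of [v].  If some LexDFS order has L-tree [t],
   every descendant of a vertex [c] is LexDFS-below [c] on the ancestors of
   its parent.  Refining by the earlier-in-BFS neighbourhoods, taken in reverse
   BFS order, sorts siblings by exactly this comparison, so DFS^+ on [t]
   visits siblings in a LexDFS-compatible order: a descendant [w] of [u] is
   below the child of [u] above it, hence below [v], and any other [w] is beaten
   by [u] itself.  Conversely, a LexDFS order produced by DFS^+ grows [t], so
   its L-tree is [t]. *)

From mathcomp Require Import all_boot zify.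
Set Implicit Arguments. Unset Strict Implicit. Unset Printing Implicit Defensive.

Section SeqFacts.
Variable T : eqType.
Implicit Types (l p q r sg : seq T) (x y u v : T).

Lemma pairwise_rev (R : rel T) l :
  pairwise R (rev l) = pairwise (fun x y => R y x) l.
Proof. by elim: l => //= x l IH; rewrite rev_cons pairwise_rcons IH all_rev andbC. Qed.

Lemma pairwise_of_all (R : rel T) l :
  {in l &, forall x y, R x y} -> pairwise R l.
Proof.
elim: l => //= x l IH H; apply/andP; split.
  by apply/allP => y yl; apply: H; rewrite inE ?eqxx ?yl ?orbT.
by apply: IH => a b al bl; apply: H; rewrite inE ?al ?bl orbT.
Qed.

Lemma pairwise_index_lt l : uniq l -> pairwise (fun x y => index x l < index y l) l.
Proof.
case: l => // x0 l' Hu; apply/(pairwiseP x0) => i j Hi Hj Hij.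
by rewrite !index_uniq.
Qed.

Lemma mem_last_nonnil l x : l != [::] -> last x l \in l.
Proof. by case: l => // a l _; rewrite last_cons mem_last. Qed.

Lemma last_nonnil l x y : l != [::] -> last x l = last y l.
Proof. by case: l. Qed.

Lemma pairwise_last (R : rel T) l x z :
  pairwise R l -> x \in l -> x != last z l -> R x (last z l).
Proof.
case/lastP: l => // l' y; rewrite last_rcons pairwise_rcons mem_rcons inE.
move=> /andP[/allP H _] /orP[/eqP->|xin]; first by rewrite eqxx.
by move=> _; exact: H.
Qed.

Lemma last_filter_last (P : pred T) l x z :
  l != [::] -> P (last x l) -> last z (filter P l) = last x l.
Proof.
case/lastP: l => // l' y _; rewrite last_rcons filter_rcons => ->.
by rewrite last_rcons.
Qed.

Lemma last_rev l x : last x (rev l) = head x l.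
Proof. by case: l => //= a l; rewrite rev_cons last_rcons. Qed.

Lemma filter_head_mem (P : pred T) l u r :
  [seq y <- l | P y] = u :: r -> u \in l /\ P u.
Proof.
move=> E; have : u \in [seq y <- l | P y] by rewrite E mem_head.
by rewrite mem_filter => /andP[].
Qed.

Lemma index_lt_last_filter (P : pred T) p u r x : uniq p ->
  [seq y <- rev p | P y] = u :: r -> x \in p -> P x -> x != u ->
  index x p < index u p.
Proof.
move=> U E xp Px xu.
have Ef : [seq y <- p | P y] = rcons (rev r) u.
  by rewrite -[LHS]revK -filter_rev E rev_cons.
have xf : x \in [seq y <- p | P y] by rewrite mem_filter Px.
have pw := subseq_pairwise (filter_subseq P p) (pairwise_index_lt U).
have := pairwise_last (z := u) pw xf; rewrite Ef last_rcons; exact.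
Qed.

Lemma uniq_cat_notin sg p q v x :
  uniq sg -> sg = p ++ v :: q -> x \in v :: q -> x \notin p.
Proof.
move=> U E xin; move: U; rewrite E cat_uniq => /and3P[_ H _].
by apply/negP => xp; move/negP: H; apply; apply/hasP; exists x.
Qed.

Lemma index_prefix_lt sg p q v x : sg = p ++ v :: q -> x \in p -> index x sg < size p.
Proof. by move=> -> xp; rewrite index_cat xp index_mem. Qed.

Lemma index_split sg p q v : uniq sg -> sg = p ++ v :: q -> index v sg = size p.
Proof.
move=> U E; have := uniq_cat_notin U E (mem_head v q).
by rewrite E => H; rewrite index_pivot.
Qed.

Lemma index_suffix_ge sg p q v x :
  uniq sg -> sg = p ++ v :: q -> x \in v :: q -> size p <= index x sg.
Proof.
move=> U E xin; have := uniq_cat_notin U E xin.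
by rewrite E index_cat => /negbTE ->; rewrite leq_addr.
Qed.

Lemma index_prefix sg p r y : sg = p ++ r -> y \in p -> index y sg = index y p.
Proof. by move=> -> yp; rewrite index_cat yp. Qed.

Lemma mem_prefix_index sg p r y : sg = p ++ r -> index y sg < size p -> y \in p.
Proof.
move=> ->; rewrite index_cat; case: (y \in p) => //.
by rewrite ltnNge leq_addr.
Qed.

Lemma split_at_index sg x :
  x \in sg -> sg = take (index x sg) sg ++ x :: drop (index x sg).+1 sg.
Proof.
move=> xin.
by rewrite -{1}(cat_take_drop (index x sg) sg) (drop_nth x) ?nth_index ?index_mem.
Qed.

Lemma index_rev_add l x : uniq l -> x \in l ->
  index x (rev l) + index x l = (size l).-1.
Proof.
elim: l => //= a l IH /andP[an U]; rewrite inE rev_cons -cats1 index_cat mem_rev.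
case: (x =P a) => [->|/eqP xa] /=.
  by rewrite (negbTE an) eqxx addn0 addn0 size_rev.
rewrite eq_sym (negbTE xa) /= => xl; rewrite xl addnS IH //.
by case: (l) xl.
Qed.

Lemma index_rev_lt l x y : uniq l -> x \in l -> y \in l ->
  (index x (rev l) < index y (rev l)) = (index y l < index x l).
Proof.
move=> U xl yl; have h1 := index_rev_add U xl; have h2 := index_rev_add U yl.
lia.
Qed.

End SeqFacts.

Lemma connect_cross (T : finType) (g : rel T) (A : {pred T}) a b :
  connect g a b -> a \in A -> b \notin A ->
  exists x z, [/\ x \in A, z \notin A & g x z].
Proof.
move/connectP=> [p]; elim: p a => [|y p IH] a /=; first by move=> _ -> ->.
move=> /andP[gay pth] Eb Aa nAb.
case Ay: (y \in A); first exact: IH y pth Eb Ay nAb.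
by exists a, y; rewrite Ay.
Qed.

(* [profile_le r l w v]: the vector [seq r x w | x <- l] is lexicographically
   at most [seq r x v | x <- l] (with [false < true]). *)
Fixpoint profile_le (A B : Type) (r : A -> B -> bool) (l : seq A) (w v : B) : bool :=
  if l is x :: l' then (if r x w == r x v then profile_le r l' w v else r x v)
  else true.

Section Profile.
Variables (A B : Type) (r : A -> B -> bool).

Lemma profile_le_refl l v : profile_le r l v v.
Proof. by elim: l => //= x l IH; rewrite eqxx. Qed.

Lemma profile_le_trans l a b c :
  profile_le r l a b -> profile_le r l b c -> profile_le r l a c.
Proof.
elim: l => //= x l IH.
by case: (r x a); case: (r x b); case: (r x c) => //=; apply: IH.
Qed.

Lemma profile_le_same l w v : all (fun x => r x w == r x v) l -> profile_le r l w v.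
Proof. by elim: l => //= x l IH /andP[-> H]; apply: IH. Qed.

Lemma profile_le_rcons l x w v : profile_le r (rcons l x) w v =
  if all (fun y => r y w == r y v) l then (r x w == r x v) || r x v
  else profile_le r l w v.
Proof.
elim: l => /= [|y l ->]; first by case: (r x w); case: (r x v).
by case: eqP.
Qed.

Lemma profile_le_filter_diff l w v :
  profile_le r l w v = profile_le r [seq x <- l | r x w != r x v] w v.
Proof.
elim: l => //= x l IH; case E: (r x w == r x v) => /=; first by rewrite IH.
by rewrite E.
Qed.

Lemma profile_le_filter (P : pred A) l w v :
  profile_le (fun x y => r x y && P x) l w v = profile_le r (filter P l) w v.
Proof.
elim: l => //= x l IH; case: (P x) => /=; rewrite ?andbT ?andbF ?eqxx //.
by rewrite IH.
Qed.

Lemma profile_le_map (A' : Type) (f : A' -> A) l w v :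
  profile_le r (map f l) w v = profile_le (fun x => r (f x)) l w v.
Proof. by elim: l => //= x l ->. Qed.

End Profile.

Section ProfileEq.
Variables (A : eqType) (B : Type) (r : A -> B -> bool).

Lemma eq_in_profile_le (r2 : A -> B -> bool) l w v :
  (forall x, x \in l -> r x w = r2 x w /\ r x v = r2 x v) ->
  profile_le r l w v = profile_le r2 l w v.
Proof.
elim: l => //= x l IH H.
have [-> ->] := H x (mem_head x l).
by rewrite IH // => y Hy; apply: H; rewrite inE Hy orbT.
Qed.

Lemma profile_le_first l w v :
  {in l, forall x, ~~ r x v} -> (exists2 x, x \in l & r x w) ->
  profile_le r l w v = false.
Proof.
elim: l => [|x l IH] H [y /= Hy ryw] //.
have /negbTE rxv := H x (mem_head x l).
rewrite rxv; case rxw: (r x w) => //=.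
apply: IH; first by move=> z Hz; apply: H; rewrite inE Hz orbT.
move: Hy; rewrite inE => /orP[/eqP E|Hy]; first by rewrite E rxw in ryw.
by exists y.
Qed.

End ProfileEq.

Section LexLabel.
Variables (T : finType) (e : rel T) (s : T).

Let numlabel (p : seq T) w :=
  [seq i.+1 | i <- rev (iota 0 (size p)) & e (nth w p i) w].

Let numlabel_rcons p x w : numlabel (rcons p x) w =
  (if e x w then [:: (size p).+1] else [::]) ++ numlabel p w.
Proof.
rewrite /numlabel size_rcons -addn1 iotaD rev_cat /= nth_rcons ltnn eqxx add0n.
have -> : [seq i <- rev (iota 0 (size p)) | e (nth w (rcons p x) i) w] =
          [seq i <- rev (iota 0 (size p)) | e (nth w p i) w].
  apply: eq_in_filter => i; rewrite mem_rev mem_iota add0n /= => Hi.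
  by rewrite nth_rcons Hi.
by case: (e x w); rewrite /= ?addn1.
Qed.

Let numlabel_le p w : all (fun i => i <= size p) (numlabel p w).
Proof.
rewrite /numlabel all_map; apply/allP => i; rewrite mem_filter mem_rev mem_iota /=.
by case/andP.
Qed.

Lemma lexle_lexlabel p w v : w != s -> v != s ->
  lexle (lexlabel e s p w) (lexlabel e s p v) = profile_le e (rev p) w v.
Proof.
move=> Hw Hv; rewrite /lexlabel (negbTE Hw) (negbTE Hv) !cats0 -!/(numlabel _ _).
elim/last_ind: p => [|p x IH] //.
rewrite !numlabel_rcons rev_rcons /=.
have Lw := numlabel_le p w; have Lv := numlabel_le p v.
case: (e x w); case: (e x v) => /=.
- by rewrite ltnn eqxx /= IH.
- case: (numlabel p v) Lv => //= y l /andP[Hy _].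
  have h1 : ((size p).+1 < y) = false.
    by apply/negbTE; rewrite -leqNgt; exact: leq_trans Hy (leqnSn _).
  have h2 : ((size p).+1 == y) = false by apply/eqP => E; rewrite -E ltnn in Hy.
  by rewrite h1 h2.
- by case: (numlabel p w) Lw => //= y l /andP[Hy _]; rewrite ltnS Hy.
- exact: IH.
Qed.

End LexLabel.

Section Refinement.
Variable T : finType.
Implicit Types (Ss Q : seq {set T}) (S A B : {set T}) (x y : T).

(* [part_le Ss x y]: in the partition of [T] refined successively by the sets
   of [Ss], the block of [x] is not after the block of [y]. *)
Definition part_le Ss x y := profile_le (fun S z => z \in S) Ss y x.

Definition part_eq Ss x y := all (fun S => (x \in S) == (y \in S)) Ss.

Definition part_lt Ss : rel {set T} := fun A B =>
  [forall x, forall y, (x \in A) ==> (y \in B) ==> part_le Ss x y && ~~ part_eq Ss x y].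

Definition refines Q Ss :=
  [/\ forall A, A \in Q -> {in A &, forall x y, part_eq Ss x y},
      pairwise (part_lt Ss) Q & forall x, has (fun A => x \in A) Q].

Lemma part_eq_sym Ss x y : part_eq Ss x y = part_eq Ss y x.
Proof. by apply: eq_all => S; rewrite eq_sym. Qed.

Lemma part_eq_le Ss x y : part_eq Ss x y -> part_le Ss x y.
Proof. by move=> H; apply: profile_le_same; rewrite -/(part_eq Ss y x) part_eq_sym. Qed.

Lemma part_le_rcons Ss S x y : part_le (rcons Ss S) x y =
  if part_eq Ss x y then ((x \in S) == (y \in S)) || (x \in S) else part_le Ss x y.
Proof.
rewrite /part_le profile_le_rcons -/(part_eq Ss y x) part_eq_sym.
by case: (part_eq Ss x y) => //; case: (x \in S); case: (y \in S).
Qed.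

Lemma part_eq_rcons Ss S x y :
  part_eq (rcons Ss S) x y = part_eq Ss x y && ((x \in S) == (y \in S)).
Proof. by rewrite /part_eq all_rcons andbC. Qed.

Definition split_block S A : seq {set T} :=
  if (A :&: S != set0) && (A :\: S != set0) then [:: A :&: S; A :\: S] else [:: A].

Lemma split_block_sub S A A' x : A' \in split_block S A -> x \in A' -> x \in A.
Proof.
rewrite /split_block; case: ifP => _; last by rewrite inE => /eqP ->.
by rewrite !inE => /orP[] /eqP ->; rewrite !inE => /andP[].
Qed.

Lemma split_block_same S A A' x y :
  A' \in split_block S A -> x \in A' -> y \in A' -> (x \in S) = (y \in S).
Proof.
rewrite /split_block; case: ifP => [_|].
  rewrite !inE => /orP[] /eqP ->; rewrite !inE.
  - by move=> /andP[_ ->] /andP[_ ->].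
  - by move=> /andP[/negbTE -> _] /andP[/negbTE -> _].
move/negbT; rewrite negb_and !negbK => /orP[] /eqP /setP E; rewrite inE => /eqP ->;
  move=> xA yA; have := E x; have := E y; rewrite !inE xA yA ?andbT /=.
- by move=> -> ->.
- by move=> /negbFE -> /negbFE ->.
Qed.

Lemma split_block_cover S A x : x \in A -> has (fun A' => x \in A') (split_block S A).
Proof.
rewrite /split_block; case: ifP => _ xA /=; last by rewrite xA.
by rewrite !inE xA; case: (x \in S).
Qed.

Lemma split_block_sorted Ss S A : {in A &, forall x y, part_eq Ss x y} ->
  pairwise (part_lt (rcons Ss S)) (split_block S A).
Proof.
move=> H; rewrite /split_block; case: ifP => _ //=; rewrite !andbT.
apply/forallP => x; apply/forallP => y; rewrite !inE.
apply/implyP => /andP[xA xS]; apply/implyP => /andP[yS yA].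
by rewrite part_le_rcons part_eq_rcons H // xS (negbTE yS).
Qed.

Lemma refines_refine Q Ss S : refines Q Ss -> refines (refine Q S) (rcons Ss S).
Proof.
have refineE : refine Q S = flatten [seq split_block S A | A <- Q] by [].
case=> blockP sortedQ coverQ; rewrite refineE; split.
- move=> A' /flatten_mapP [A AQ A'A] x y xA' yA'.
  rewrite part_eq_rcons (split_block_same A'A xA' yA') eqxx andbT.
  exact: blockP AQ _ _ (split_block_sub A'A xA') (split_block_sub A'A yA').
- elim: Q blockP sortedQ {coverQ refineE} => //= A Q IH blockP /andP[HA HQ].
  rewrite pairwise_cat; apply/and3P; split.
  + apply/allrelP => A' B' A'A /flatten_mapP [B BQ B'B].
    apply/forallP => x; apply/forallP => y; apply/implyP => xA'; apply/implyP => yB'.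
    have := allP HA B BQ => /forallP /(_ x) /forallP /(_ y).
    rewrite (split_block_sub A'A xA') (split_block_sub B'B yB') /= => /andP[b ns].
    by rewrite part_le_rcons part_eq_rcons (negbTE ns) /= b.
  + by apply: split_block_sorted; apply: blockP; rewrite inE eqxx.
  + by apply: IH => // B BQ; apply: blockP; rewrite inE BQ orbT.
- move=> x; have /hasP [A AQ xA] := coverQ x.
  have /hasP [A' A'A xA'] := split_block_cover S xA.
  by apply/hasP; exists A' => //; apply/flatten_mapP; exists A.
Qed.

Lemma refines_foldl (Sv : T -> {set T}) (l : seq T) Q Ss : refines Q Ss ->
  refines (foldl (fun Q v => refine Q (Sv v)) Q l) (Ss ++ map Sv l).
Proof.
elim: l Q Ss => [|v l IH] Q Ss H /=; first by rewrite cats0.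
by rewrite -cat_rcons; apply: IH; apply: refines_refine.
Qed.

Lemma refines_setT : refines [:: setT] [::].
Proof. by split => // x; rewrite /= inE. Qed.

Lemma part_le_blocks Q Ss (s : T) (rho : seq T) : refines Q Ss ->
  pairwise (fun a b => (a != s) ==> (b != s) ==> part_le Ss a b)
    (flatten [seq [seq x <- rev rho | x \in A]
               | A : {set T} <- [set s] :: [seq A <- Q | A != [set s]]]).
Proof.
case=> blockP sortedQ _; rewrite /= pairwise_cat; apply/and3P; split.
- apply/allrelP => a b; rewrite mem_filter inE => /andP[/eqP -> _] _.
  by rewrite eqxx.
- apply: pairwise_of_all => a b; rewrite mem_filter inE => /andP[/eqP -> _] _.
  by rewrite eqxx.
- have blockP' : forall A, A \in [seq A <- Q | A != [set s]] ->
      {in A &, forall x y, part_eq Ss x y}.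
    by move=> A; rewrite mem_filter => /andP[_]; apply: blockP.
  have := pairwise_filter (fun A => A != [set s]) sortedQ.
  elim: [seq A <- Q | A != [set s]] blockP' => //= A Q' IH J1 /andP[JA JQ].
  rewrite pairwise_cat; apply/and3P; split.
  + apply/allrelP => a b; rewrite mem_filter => /andP[aA _] /flatten_mapP [B BQ].
    rewrite mem_filter => /andP[bB _]; apply/implyP => _; apply/implyP => _.
    have := allP JA B BQ => /forallP /(_ a) /forallP /(_ b).
    by rewrite aA bB /= => /andP[].
  + apply: pairwise_of_all => a b; rewrite !mem_filter => /andP[aA _] /andP[bA _].
    by rewrite part_eq_le ?implybT // (J1 A (mem_head _ _)).
  + by apply: IH => // B BQ; apply: J1; rewrite inE BQ orbT.
Qed.

End Refinement.

Lemma lexdfs_head (T : finType) (e : rel T) x sg : lexdfs_from e x sg -> head x sg = x.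
Proof.
case=> P H; have xin : x \in sg by rewrite (perm_mem P) mem_enum.
case: sg P H xin => // v q P H xin /=.
case: (v =P x) => // /eqP vx.
have xq : x \in q by move: xin; rewrite inE eq_sym (negbTE vx).
have := H [::] v q erefl x xq.
by rewrite /lexlabel /= eqxx (negbTE vx).
Qed.

Section DFSTree.
Variables (T : finType) (e t : rel T) (s : T) (sdfs : seq T).
Hypothesis e_sym : symmetric e.
Hypothesis e_conn : forall x y, connect e x y.
Hypothesis t_conn : forall x y, connect t x y.
Hypothesis sdfs_perm : perm_eq sdfs (enum T).
Hypothesis sdfs_head : head s sdfs = s.
Hypothesis sdfs_dfs : forall p v q, sdfs = p ++ v :: q -> active e p != [::] ->
  e (last v (active e p)) v.
Hypothesis sdfs_ltree : t =2 ltree e sdfs.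

Local Notation pos x := (index x sdfs).

Lemma sdfs_uniq : uniq sdfs.
Proof. by rewrite (perm_uniq sdfs_perm) enum_uniq. Qed.

Lemma mem_sdfs x : x \in sdfs.
Proof. by rewrite (perm_mem sdfs_perm) mem_enum. Qed.

Lemma pos_root : pos s = 0.
Proof. by move: sdfs_head (mem_sdfs s); case: sdfs => //= a l ->; rewrite eqxx. Qed.

Lemma pos_inj x y : pos x = pos y -> x = y.
Proof. exact: (index_inj s (mem_sdfs x) (mem_sdfs y)). Qed.

Lemma mem_take_sdfs x k : (x \in take k sdfs) = (pos x < k).
Proof. by rewrite in_take ?mem_sdfs. Qed.

Lemma pos_ind (P : T -> Prop) :
  (forall y, (forall z, pos z < pos y -> P z) -> P y) -> forall y, P y.
Proof.
move=> H y; move: {2}(pos y) (leqnn (pos y)) => n.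
elim: n y => [|n IH] y Hy; apply: H => z Hz; first by move: (leq_trans Hz Hy).
by apply: IH; rewrite -ltnS; exact: leq_trans Hz Hy.
Qed.

Definition left_nbrs y := [seq u <- take (pos y) sdfs | e u y].

(* The L-parent of [y] in [sdfs]; the root is its own parent. *)
Definition parent y := last y (left_nbrs y).

Lemma active_before_nonnil y : y != s -> active e (take (pos y) sdfs) != [::].
Proof.
move=> ys.
have sin : s \in take (pos y) sdfs.
  rewrite mem_take_sdfs pos_root lt0n.
  by apply: contra_neq ys => /esym; rewrite -pos_root => /pos_inj.
have ynin : y \notin take (pos y) sdfs by rewrite mem_take_sdfs ltnn.
have [x [z [xin znin exz]]] := connect_cross (e_conn s y) sin ynin.
apply: contraTneq xin => H.
have : x \notin active e (take (pos y) sdfs) by rewrite H.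
by rewrite mem_filter negb_and => /orP[/existsPn /(_ z)|//]; rewrite exz znin.
Qed.

(* This is where the DFS property of [sdfs] enters: the L-parent is the last
   active vertex. *)
Lemma left_nbrs_active y : y != s ->
  parent y = last y (active e (take (pos y) sdfs)) /\ left_nbrs y != [::].
Proof.
move=> ys; set p := take (pos y) sdfs.
have ne := active_before_nonnil ys.
have ea : e (last y (active e p)) y by apply: sdfs_dfs (split_at_index (mem_sdfs y)) ne.
have ain : last y (active e p) \in active e p by apply: mem_last_nonnil.
have E : left_nbrs y = [seq u <- active e p | e u y].
  rewrite /left_nbrs /active -filter_predI; apply: eq_in_filter => u up /=.
  case eu: (e u y) => //=; symmetry; apply/existsP; exists y.
  by rewrite eu /= /p mem_take_sdfs ltnn.
split; first by rewrite /parent E; apply: last_filter_last.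
by rewrite E -has_filter; apply/hasP; exists (last y (active e p)).
Qed.

Lemma parent_root : parent s = s.
Proof. by rewrite /parent /left_nbrs pos_root take0. Qed.

Lemma parent_left_nbr y : y != s -> parent y \in left_nbrs y.
Proof. by move=> ys; have [_ ne] := left_nbrs_active ys; apply: mem_last_nonnil. Qed.

Lemma parent_edge y : y != s -> e (parent y) y.
Proof. by move/parent_left_nbr; rewrite mem_filter => /andP[]. Qed.

Lemma pos_parent_lt y : y != s -> pos (parent y) < pos y.
Proof. by move/parent_left_nbr; rewrite mem_filter mem_take_sdfs => /andP[]. Qed.

Lemma pos_parent_le y : pos (parent y) <= pos y.
Proof. by case: (y =P s) => [->|/eqP /pos_parent_lt /ltnW //]; rewrite parent_root. Qed.

Lemma parent_neq y : y != s -> parent y != y.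
Proof. by move/pos_parent_lt; apply: contraTneq => ->; rewrite ltnn. Qed.

Lemma t_parentE x y :
  t x y = ((y != s) && (x == parent y)) || ((x != s) && (y == parent x)).
Proof.
have lparentE x' y' : lparent e sdfs x' y' = (y' != s) && (x' == parent y').
  rewrite /lparent -/(left_nbrs y').
  case: (y' =P s) => [->|/eqP ys] /=; first by rewrite /left_nbrs pos_root take0.
  have [_ ne] := left_nbrs_active ys; rewrite ne /= /parent.
  by rewrite (last_nonnil _ y' ne).
by rewrite sdfs_ltree /ltree !lparentE.
Qed.

Definition ancestor x y := fconnect parent y x.

Lemma ancestor_refl x : ancestor x x.
Proof. exact: connect0. Qed.

Lemma ancestor_parent y : ancestor (parent y) y.
Proof. exact: fconnect1. Qed.

Lemma ancestor_trans x y z : ancestor x y -> ancestor y z -> ancestor x z.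
Proof. by move=> H1 H2; exact: connect_trans H2 H1. Qed.

Lemma ancestor_pos_le x y : ancestor x y -> pos x <= pos y.
Proof.
move/connectP=> [p]; elim: p y => [|z p IH] y /=; first by move=> _ ->.
move=> /andP[/eqP E pth] Hx; subst z.
exact: leq_trans (IH _ pth Hx) (pos_parent_le y).
Qed.

Lemma ancestor_anti x y : ancestor x y -> ancestor y x -> x = y.
Proof. by move=> H1 H2; apply: pos_inj; apply/eqP; rewrite eqn_leq !ancestor_pos_le. Qed.

Lemma ancestor_parent_neq x y : ancestor x y -> x != y -> ancestor x (parent y).
Proof.
move/connectP=> [[|z p]] /=; first by move=> _ ->; rewrite eqxx.
by move=> /andP[/eqP E pth] Hx _; subst z; apply/connectP; exists p.
Qed.

Lemma ancestor_root x : ancestor x s -> x = s.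
Proof.
move/ancestor_pos_le; rewrite pos_root leqn0 => /eqP.
by rewrite -pos_root => /pos_inj.
Qed.

Lemma not_ancestor_parent c : c != s -> ~~ ancestor c (parent c).
Proof. by move=> cs; apply/negP => /ancestor_pos_le; rewrite leqNgt pos_parent_lt. Qed.

Lemma ancestor_total x y z : ancestor x z -> ancestor y z ->
  ancestor x y || ancestor y x.
Proof.
elim/pos_ind: z => z IH Hx Hy.
case: (x =P z) => [->|/eqP xz]; first by rewrite Hy orbT.
case: (y =P z) => [->|/eqP yz]; first by rewrite Hx.
have zs : z != s by apply: contra_neq xz => zs; subst z; exact: ancestor_root.
by apply: (IH (parent z)); rewrite ?pos_parent_lt ?ancestor_parent_neq.
Qed.

Lemma ancestor_child u w : ancestor u w -> u != w ->
  exists c, [/\ parent c = u, c != s & ancestor c w].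
Proof.
elim/pos_ind: w => w IH Hu uw.
have ws : w != s by apply: contra_neq uw => ws; subst w; exact: ancestor_root.
case: (parent w =P u) => [E|/eqP pu]; first by exists w; rewrite ancestor_refl.
have [|c [E1 E2 E3]] := IH (parent w) (pos_parent_lt ws) (ancestor_parent_neq Hu uw).
  by rewrite eq_sym.
by exists c; split => //; apply: ancestor_trans E3 (ancestor_parent w).
Qed.

Lemma ancestor_exit (A : {pred T}) y w : y \in A -> w \notin A -> ancestor y w ->
  exists z, [/\ z \notin A, parent z \in A, ancestor y (parent z) & ancestor z w].
Proof.
elim/pos_ind: w => w IH Ay nAw Hyw.
have yw : y != w by apply: contraNneq nAw => <-.
have Hyp := ancestor_parent_neq Hyw yw.
case Ap: (parent w \in A); first by exists w; rewrite ancestor_refl.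
have ws : w != s by apply: contra_neq yw => ws; subst w; exact: ancestor_root.
have [z [E1 E2 E3 E4]] := IH (parent w) (pos_parent_lt ws) Ay (negbT Ap) Hyp.
by exists z; split => //; apply: ancestor_trans E4 (ancestor_parent w).
Qed.

(* Each parent is the last active vertex, so active vertices lie on the path
   to the next one. *)
Lemma active_ancestor a x : x \in take (pos a) sdfs ->
  (exists w, e x w && (w \notin take (pos a) sdfs)) -> ancestor x a.
Proof.
elim/pos_ind: a => a IH xin [w Hw].
have aS : a != s by apply: contraTneq xin => ->; rewrite pos_root take0.
have [pa _] := left_nbrs_active aS.
have xact : x \in active e (take (pos a) sdfs).
  by rewrite mem_filter xin andbT; apply/existsP; exists w.
case: (x =P parent a) => [->|/eqP xb]; first exact: ancestor_parent.
have act_sorted : pairwise (fun a b => pos a < pos b) (active e (take (pos a) sdfs)).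
  apply: subseq_pairwise (pairwise_index_lt sdfs_uniq).
  exact: subseq_trans (filter_subseq _ _) (take_subseq _ _).
have lt : pos x < pos (parent a).
  by rewrite pa; apply: pairwise_last act_sorted xact _; rewrite -pa.
apply: ancestor_trans (ancestor_parent a); apply: (IH (parent a)).
- exact: pos_parent_lt.
- by rewrite mem_take_sdfs.
- exists w; move: Hw => /andP[-> /=]; rewrite !mem_take_sdfs -!leqNgt => H.
  exact: leq_trans (ltnW (pos_parent_lt aS)) H.
Qed.

Lemma edge_ancestor x y : e x y -> ancestor x y || ancestor y x.
Proof.
move=> exy; case: (ltngtP (pos x) (pos y)) => H.
- apply/orP; left; apply: active_ancestor; first by rewrite mem_take_sdfs.
  by exists y; rewrite exy mem_take_sdfs ltnn.
- apply/orP; right; apply: active_ancestor; first by rewrite mem_take_sdfs.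
  by exists x; rewrite e_sym exy mem_take_sdfs ltnn.
- by rewrite (pos_inj H) ancestor_refl.
Qed.

Definition tree_order (sg : seq T) :=
  forall x y, ancestor x y -> index x sg <= index y sg.

Lemma tree_order_parent (sg : seq T) :
  (forall y, y != s -> index (parent y) sg < index y sg) -> tree_order sg.
Proof.
move=> H x y /connectP [p]; elim: p y => [|z p IH] y /=; first by move=> _ ->.
move=> /andP[/eqP E pth] Hx; subst z; apply: leq_trans (IH _ pth Hx) _.
case: (y =P s) => [->|/eqP ys]; first by rewrite parent_root.
exact: ltnW (H y ys).
Qed.

Section TreeOrder.
Variable sg : seq T.
Hypothesis sg_perm : perm_eq sg sdfs.

Let sg_uniq : uniq sg. Proof. by rewrite (perm_uniq sg_perm) sdfs_uniq. Qed.
Let mem_sg x : x \in sg. Proof. by rewrite (perm_mem sg_perm) mem_sdfs. Qed.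

Lemma index_sg_inj x y : index x sg = index y sg -> x = y.
Proof. exact: (index_inj s (mem_sg x) (mem_sg y)). Qed.

Lemma index_parent_lt y : tree_order sg -> y != s -> index (parent y) sg < index y sg.
Proof.
move=> R ys; rewrite ltn_neqAle R ?ancestor_parent // andbT.
by apply: contra_neq (parent_neq ys) => /index_sg_inj.
Qed.

Lemma sorted_ancestors_filter u :
  tree_order sg -> sorted ancestor [seq x <- sg | ancestor x u].
Proof.
move=> R; rewrite sorted_pairwise; last by move=> ? ? ?; apply: ancestor_trans.
apply: (sub_in_pairwise (P := [pred x | ancestor x u])); last first.
- exact: pairwise_filter (pairwise_index_lt sg_uniq).
- exact: filter_all.
move=> a b; rewrite !inE => Ha Hb lt.
case/orP: (ancestor_total Ha Hb) => // H.
by move: (R _ _ H); rewrite leqNgt lt.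
Qed.

Definition tree_grown :=
  forall p v q, sg = p ++ v :: q -> p != [::] -> exists2 h, h \in p & t h v.

Lemma tree_grown_order : head s sg = s -> tree_grown -> tree_order sg.
Proof.
move=> H0 St; apply: tree_order_parent.
have key k x : index x sg < k -> x != s -> index (parent x) sg < k.
  elim: k x => // k IH x; rewrite ltnS leq_eqVlt => /orP[/eqP Ek|lt] xs; last first.
    exact: ltnW (IH x lt xs).
  have E := split_at_index (mem_sg x); rewrite Ek in E.
  have pne : take k sg != [::].
    apply: contra_neq xs => E0.
    have : size (take k sg) = k by rewrite size_takel // -Ek ltnW // index_mem.
    rewrite E0 => k0; rewrite -k0 in Ek.
    by rewrite -(nth_index s (mem_sg x)) Ek nth0 H0.
  have [h hin thx] := St _ _ _ E pne.
  have hk : index h sg < k by rewrite -(in_take _ (mem_sg h)).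
  move: thx; rewrite t_parentE => /orP[/andP[_ /eqP <-]|/andP[hs /eqP Exh]].
    exact: ltnW hk.
  by move: (IH h hk hs); rewrite -Exh Ek ltnn.
move=> y ys; have := key (index y sg).+1 y (ltnSn _) ys.
rewrite ltnS leq_eqVlt => /orP[/eqP /index_sg_inj E|//].
by move: (parent_neq ys); rewrite E eqxx.
Qed.

(* By [edge_ancestor], the rightmost earlier neighbour of a vertex is its parent. *)
Lemma ltree_tree_order : tree_order sg -> head s sg = s -> t =2 ltree e sg.
Proof.
move=> R H0.
have lp x y : lparent e sg x y = (y != s) && (x == parent y).
  rewrite /lparent.
  case: (y =P s) => [->|/eqP ys] /=.
    by case: (sg) H0 => //= a l ->; rewrite eqxx take0.
  set P' := [seq u <- take (index y sg) sg | e u y].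
  have lt := index_parent_lt R ys.
  have pin : parent y \in P' by rewrite mem_filter parent_edge // in_take.
  have ne : P' != [::] by case: (P') pin.
  rewrite ne /= (last_nonnil _ (parent y) ne).
  set L := last (parent y) P'.
  have Lin : L \in P' by apply: mem_last_nonnil.
  suff -> : L = parent y by [].
  apply/eqP; apply/negPn/negP => NL.
  have pw : pairwise (fun a b => index a sg < index b sg) P'.
    apply: subseq_pairwise (pairwise_index_lt sg_uniq).
    exact: subseq_trans (filter_subseq _ _) (take_subseq _ _).
  have i1 : index (parent y) sg < index L sg by apply: pairwise_last pw pin _; rewrite eq_sym.
  move: Lin; rewrite mem_filter in_take // => /andP[eL iL].
  case/orP: (edge_ancestor eL) => H.
    have Ly : L != y by apply: contraTneq iL => ->; rewrite ltnn.
    by move: (R _ _ (ancestor_parent_neq H Ly)); rewrite leqNgt i1.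
  by move: (R _ _ H); rewrite leqNgt iL.
by move=> x y; rewrite /ltree !lp t_parentE.
Qed.

End TreeOrder.

Lemma sdfs_tree_order : tree_order sdfs.
Proof. by apply: tree_order_parent => y ys; apply: pos_parent_lt. Qed.

Definition ancestors u := [seq x <- sdfs | ancestor x u].

Lemma filter_ancestors (sg : seq T) u : perm_eq sg sdfs -> tree_order sg ->
  [seq x <- sg | ancestor x u] = ancestors u.
Proof.
move=> P R; apply: (sorted_eq (leT := ancestor)).
- by move=> ? ? ?; apply: ancestor_trans.
- by move=> x y /andP[]; apply: ancestor_anti.
- exact: sorted_ancestors_filter P u R.
- exact: sorted_ancestors_filter (perm_refl sdfs) u sdfs_tree_order.
- exact: perm_filter.
Qed.

Lemma rev_ancestors u : exists l, rev (ancestors u) = u :: l.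
Proof.
rewrite /ancestors {1}(split_at_index (mem_sdfs u)) filter_cat /= ancestor_refl.
have -> : [seq x <- drop (pos u).+1 sdfs | ancestor x u] = [::].
  apply/eqP; rewrite -[_ == _]negbK -has_filter; apply/hasPn => x xin.
  apply/negP => /ancestor_pos_le H.
  have := sdfs_uniq; rewrite -(cat_take_drop (pos u).+1 sdfs) cat_uniq.
  case/and3P => _ /hasPn /(_ x xin) + _.
  by rewrite mem_take_sdfs ltnS H.
by exists (rev [seq x <- take (pos u) sdfs | ancestor x u]); rewrite rev_cat.
Qed.

(* [w] is LexDFS-below [v] as far as the ancestors of [u] can tell. *)
Definition chain_le u w v := profile_le e (rev (ancestors u)) w v.

Lemma profile_le_prefix (sg p q : seq T) v w : perm_eq sg sdfs -> tree_order sg ->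
  sg = p ++ v :: q -> v != s -> w \in q ->
  {in p, forall x, ancestor x w -> ancestor x v} ->
  profile_le e (rev p) w v = chain_le (parent v) w v.
Proof.
move=> P R E vs wq Hpw.
have U : uniq sg by rewrite (perm_uniq P) sdfs_uniq.
have wq' : w \in v :: q by rewrite inE wq orbT.
have iv := index_split U E.
have differ x : x \in p -> e x w != e x v -> ancestor x (parent v).
  move=> xp; have ix : index x sg < index v sg by rewrite iv (index_prefix_lt E xp).
  have xv : x != v by apply: contraTneq ix => ->; rewrite ltnn.
  case exv: (e x v) => /=.
    move=> _; case/orP: (edge_ancestor exv) => Hx; first exact: ancestor_parent_neq.
    by move: (R _ _ Hx); rewrite leqNgt ix.
  case exw: (e x w) => // _; case/orP: (edge_ancestor exw) => Hx.
    exact: ancestor_parent_neq (Hpw x xp Hx) xv.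
  move: (R _ _ Hx) (index_suffix_ge U E wq'); rewrite -iv => h1 h2.
  by move: (leq_trans h2 h1); rewrite leqNgt ix.
rewrite /chain_le profile_le_filter_diff [RHS]profile_le_filter_diff !filter_rev.
congr (profile_le _ (rev _) _ _).
rewrite -(filter_ancestors (parent v) P R).
have -> : [seq x <- p | e x w != e x v] =
          [seq x <- [seq x <- p | ancestor x (parent v)] | e x w != e x v].
  rewrite -filter_predI; apply: eq_in_filter => x xp /=.
  by case D: (e x w != e x v) => //=; rewrite differ.
congr filter; rewrite [in RHS]E filter_cat.
have -> : [seq x <- v :: q | ancestor x (parent v)] = [::].
  apply/eqP; rewrite -[_ == _]negbK -has_filter; apply/hasPn => x xin /=.
  apply/negP => Hx; have := R _ _ Hx.
  have i2 := index_parent_lt P R vs.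
  rewrite iv in i2; move: (leq_trans i2 (index_suffix_ge U E xin)).
  by rewrite ltnNge => /negbTE ->.
by rewrite cats0.
Qed.

Section LexDFSTree.
Variable sg : seq T.
Hypothesis sg_lexdfs : lexdfs_from e s sg.
Hypothesis sg_ltree : t =2 ltree e sg.

Let sg_perm : perm_eq sg sdfs.
Proof. by case: sg_lexdfs => P _; rewrite (perm_trans P) // perm_sym. Qed.
Let sg_uniq : uniq sg. Proof. by rewrite (perm_uniq sg_perm) sdfs_uniq. Qed.
Let mem_sg x : x \in sg. Proof. by rewrite (perm_mem sg_perm) mem_sdfs. Qed.

(* A vertex with no earlier neighbour would lose to a vertex adjacent to the
   visited part, which exists by connectivity. *)
Lemma lexdfs_tree_grown : tree_grown sg.
Proof.
move=> p v q E pne.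
have H0 := lexdfs_head sg_lexdfs; case: sg_lexdfs => _ H.
have sin : s \in p by move: H0; rewrite E; case: (p) pne => //= a l _ ->; rewrite mem_head.
have vn : v \notin p by apply: (uniq_cat_notin sg_uniq E); rewrite mem_head.
have vs : v != s by apply: contraNneq vn => ->.
case hv: (has (e^~ v) p).
  have tk : take (index v sg) sg = p by rewrite (index_split sg_uniq E) E take_size_cat.
  set P' := [seq u <- p | e u v].
  have ne : P' != [::] by rewrite -has_filter.
  exists (last v P'); first by have := mem_last_nonnil v ne; rewrite mem_filter => /andP[].
  rewrite sg_ltree /ltree /lparent tk -/P'; apply/orP; left; rewrite ne /=.
  by apply/eqP; apply: last_nonnil.
have [x [z [xp zn exz]]] := connect_cross (e_conn s v) sin vn.
have : z \in sg by [].
rewrite E mem_cat (negbTE zn) /= inE => /orP[/eqP zv|zq].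
  by move: hv; rewrite -zv => /negbT /hasPn /(_ x xp); rewrite exz.
have zs : z != s by apply: contraNneq zn => ->.
have := H p v q E z zq; rewrite (lexle_lexlabel _ _ zs vs) profile_le_first //.
  by move=> y; rewrite mem_rev => yp; move: hv => /negbT /hasPn /(_ y yp).
by exists x; rewrite ?mem_rev.
Qed.

Lemma lexdfs_tree_order : tree_order sg.
Proof. exact: tree_grown_order sg_perm (lexdfs_head sg_lexdfs) lexdfs_tree_grown. Qed.

(* When [c] is visited, all its descendants are still unvisited, so the LexDFS
   rule compares them with [c]. *)
Lemma lexdfs_descendant_le c w : c != s -> ancestor c w -> chain_le (parent c) w c.
Proof.
move=> cs Hcw; have R := lexdfs_tree_order.
case: (w =P c) => [->|/eqP wc]; first exact: profile_le_refl.
have E := split_at_index (mem_sg c); set p := take (index c sg) sg in E.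
have wq : w \in drop (index c sg).+1 sg.
  have : w \in sg by [].
  rewrite {1}E mem_cat inE (negbTE wc) /= => /orP[|//].
  by rewrite /p in_take // ltnNge R.
have ws : w != s by apply: contra_neq cs => ws; subst w; exact: ancestor_root.
case: sg_lexdfs => _ H.
rewrite -(profile_le_prefix sg_perm R E cs wq).
  by rewrite -(lexle_lexlabel _ _ ws cs); apply: H E w wq.
move=> x xp Hxw; case/orP: (ancestor_total Hxw Hcw) => // Hcx.
have : index x sg < index c sg by rewrite -(in_take _ (mem_sg x)).
by rewrite ltnNge R.
Qed.

End LexDFSTree.

Section BFSTree.
Variable bfs : seq T.
Hypothesis bfs_bfs : bfs_order t bfs.
Hypothesis bfs_head : head s bfs = s.

Let bfs_perm : perm_eq bfs sdfs.
Proof. by case: bfs_bfs => P _; rewrite (perm_trans P) // perm_sym. Qed.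
Let bfs_uniq : uniq bfs. Proof. by rewrite (perm_uniq bfs_perm) sdfs_uniq. Qed.
Let mem_bfs x : x \in bfs. Proof. by rewrite (perm_mem bfs_perm) mem_sdfs. Qed.

Lemma bfs_tree_order : tree_order bfs.
Proof.
apply: tree_grown_order bfs_perm bfs_head _ => p v q E pne.
case: bfs_bfs => _ H.
have sin : s \in p.
  by move: bfs_head; rewrite E; case: (p) pne => //= a l _ ->; rewrite mem_head.
have vn : v \notin p by apply: (uniq_cat_notin bfs_uniq E); rewrite mem_head.
have [x [z [xp zn txz]]] := connect_cross (t_conn s v) sin vn.
have ne : active t p != [::].
  apply: contraTneq xp => C; have : x \notin active t p by rewrite C.
  by rewrite mem_filter negb_and => /orP[/existsPn /(_ z)|//]; rewrite txz zn.
exists (head v (active t p)); last exact: H E ne.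
case: (active t p) ne (filter_subseq _ p : subseq (active t p) p) => // a l _.
by move/mem_subseq; apply; rewrite mem_head.
Qed.

Definition back_nbrs (beta : seq T) x :=
  [set w | e x w & index w beta < index x beta].

Lemma mem_back_nbrs z x : z != s ->
  (z \in back_nbrs (rev bfs) x) = e x z && ancestor x (parent z).
Proof.
move=> zs; rewrite inE index_rev_lt //; case exz: (e x z) => //=.
have R := bfs_tree_order.
apply/idP/idP => H.
  case/orP: (edge_ancestor exz) => Hx.
    by apply: ancestor_parent_neq Hx _; apply: contraTneq H => ->; rewrite ltnn.
  by move: (R _ _ Hx); rewrite leqNgt H.
have Hxz := ancestor_trans H (ancestor_parent z).
rewrite ltn_neqAle R // andbT.
apply: contraTneq H => /(index_inj s (mem_bfs _) (mem_bfs _)) ->.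
exact: not_ancestor_parent.
Qed.

Lemma part_le_siblings v c : v != s -> c != s -> parent v = parent c ->
  part_le [seq back_nbrs (rev bfs) x | x <- rev bfs] v c -> chain_le (parent v) c v.
Proof.
move=> vs cs Ep; rewrite /part_le profile_le_map /chain_le.
rewrite (eq_in_profile_le (r2 := fun x z => e x z && ancestor x (parent v))).
  by rewrite profile_le_filter filter_rev (filter_ancestors _ bfs_perm bfs_tree_order).
by move=> x _; rewrite !mem_back_nbrs // Ep.
Qed.

End BFSTree.

(* [a] may be visited before its sibling [b]. *)
Definition sibling_first a b :=
  (a != s) ==> (b != s) ==> (parent a == parent b) ==> chain_le (parent a) b a.

Section DFSPlus.
Variable tau : seq T.
Hypothesis mem_tau : forall x, x \in tau.
Hypothesis tau_last : last s tau = s.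

Definition fresh_nbrs (vis : seq T) u := [seq w <- tau | t u w & w \notin vis].

Definition visited k := iter k (dfs_plus_step t tau) [:: s].

Definition dplus := visited (#|T|).-1.

Lemma dfs_plusE : dfs_plus t tau = dplus.
Proof.
rewrite /dfs_plus /dplus /visited; move: tau_last (mem_tau s).
by case: tau => [|x r] //= ->.
Qed.

Let card_gt0 : 0 < #|T|.
Proof. by apply/card_gt0P; exists s. Qed.

Lemma dfs_plus_step_grow vis : uniq vis -> s \in vis -> size vis < #|T| ->
  exists u l, [/\ [seq u <- rev vis | fresh_nbrs vis u != [::]] = u :: l,
     dfs_plus_step t tau vis = rcons vis (last u (fresh_nbrs vis u))
   & last u (fresh_nbrs vis u) \in fresh_nbrs vis u].
Proof.
move=> U sin sz.
have [y yn] : exists y, y \notin vis.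
  apply/existsP; rewrite -[X in is_true X]negbK negb_exists; apply/negP => /forallP H.
  have := uniq_leq_size (enum_uniq T) (s2 := vis) (fun x _ => negbNE (H x)).
  by rewrite -cardT leqNgt sz.
have [x [z [xin zn txz]]] := connect_cross (t_conn s y) sin yn.
have cne : fresh_nbrs vis x != [::].
  by rewrite -has_filter; apply/hasP; exists z; rewrite ?txz ?zn.
case E: [seq u <- rev vis | fresh_nbrs vis u != [::]] => [|u l].
  have : x \in [seq u <- rev vis | fresh_nbrs vis u != [::]].
    by rewrite mem_filter cne mem_rev xin.
  by rewrite E.
have [_ une] := filter_head_mem E.
exists u, l; split => //; first by rewrite /dfs_plus_step -/(fresh_nbrs vis) E.
exact: mem_last_nonnil.
Qed.

Lemma visited_spec k : k < #|T| ->
  [/\ size (visited k) = k.+1, uniq (visited k) & head s (visited k) = s].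
Proof.
elim: k => [|k IH] lt //.
have [sz U H] := IH (ltnW lt).
have sin : s \in visited k by case: (visited k) H sz => //= a l -> _; rewrite mem_head.
have [|u [l [_ E ln]]] := dfs_plus_step_grow U sin; first by rewrite sz.
rewrite /visited iterS -/(visited k) E size_rcons sz rcons_uniq U andbT.
split => //.
- by move: ln; rewrite mem_filter => /andP[/andP[_ ->]].
- by case: (visited k) H sz.
Qed.

Lemma visited_take k m : k <= m -> m < #|T| -> visited k = take k.+1 (visited m).
Proof.
elim: m => [|m IH] km lt; first by rewrite leqn0 in km; rewrite (eqP km).
move: km; rewrite leq_eqVlt => /orP[/eqP ->|km].
  by have [sz _ _] := visited_spec lt; rewrite -sz take_size.
have [sz U H] := visited_spec (ltnW lt).
have sin : s \in visited m by case: (visited m) H sz => //= a l -> _; rewrite mem_head.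
have [|u [l [_ E ln]]] := dfs_plus_step_grow U sin; first by rewrite sz.
rewrite /visited iterS -/(visited m) E -cats1 take_cat sz.
move: km; rewrite ltnS leq_eqVlt => /orP[/eqP ->|km'].
  by rewrite ltnn subnn take0 cats0.
by rewrite ltnS km'; exact: IH (ltnW km') (ltnW lt).
Qed.

Lemma dplus_spec : [/\ size dplus = #|T|, uniq dplus & head s dplus = s].
Proof.
have lt : (#|T|).-1 < #|T| by rewrite prednK.
by have [-> ? ?] := visited_spec lt; rewrite prednK.
Qed.

Lemma dplus_uniq : uniq dplus. Proof. by have [] := dplus_spec. Qed.

Lemma perm_dplus : perm_eq dplus sdfs.
Proof.
have [sz U _] := dplus_spec.
apply: uniq_perm dplus_uniq sdfs_uniq _.
have szl : size (enum T) <= size dplus by rewrite sz cardT.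
have [_ E] := uniq_min_size U (s2 := enum T) (fun x _ => mem_enum _ x) szl.
by move=> x; rewrite E mem_enum mem_sdfs.
Qed.

Lemma mem_dplus x : x \in dplus.
Proof. by rewrite (perm_mem perm_dplus) mem_sdfs. Qed.

Lemma take_dplus k : k < #|T| -> take k.+1 dplus = visited k.
Proof. by move=> lt; rewrite (visited_take (m := (#|T|).-1)) // -ltnS prednK. Qed.

Lemma dplus_root_in_prefix p v q : dplus = p ++ v :: q -> p != [::] -> s \in p.
Proof.
have [_ _ H] := dplus_spec.
by move=> E; rewrite E in H; case: (p) H => //= a l -> _; rewrite mem_head.
Qed.

Lemma dplus_next p v q : dplus = p ++ v :: q -> p != [::] ->
  exists u l, [/\ [seq u <- rev p | fresh_nbrs p u != [::]] = u :: l,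
    v = last u (fresh_nbrs p u) & v \in fresh_nbrs p u].
Proof.
move=> E pne.
have [sz U H] := dplus_spec.
have lt : size p < #|T| by rewrite -sz E size_cat /= addnS ltnS leq_addr.
have k1 : 0 < size p by rewrite lt0n size_eq0.
have lt' : (size p).-1 < #|T| by apply: leq_ltn_trans (leq_pred _) lt.
have Ep : p = visited (size p).-1.
  by rewrite -(take_dplus lt') prednK // E take_size_cat.
have Epv : rcons p v = visited (size p).
  by rewrite -(take_dplus lt) E -cat_rcons take_size_cat // size_rcons.
have [_ Up _] := visited_spec lt'; rewrite -Ep in Up.
have [u [l [E1 E2 E3]]] := dfs_plus_step_grow Up (dplus_root_in_prefix E pne) lt.
have : rcons p v = dfs_plus_step t tau p by rewrite Epv {2}Ep /visited -iterS prednK.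
by rewrite E2 => /rcons_inj [->]; exists u, l.
Qed.

Lemma dplus_tree_order : tree_order dplus.
Proof.
apply: tree_grown_order perm_dplus _ _; first by have [] := dplus_spec.
move=> p v q E pne; have [u [l [E1 _ E3]]] := dplus_next E pne.
have [] := filter_head_mem E1; rewrite mem_rev => up _.
by exists u => //; move: E3; rewrite mem_filter => /andP[/andP[]].
Qed.

Lemma dplus_next_parent p v q : dplus = p ++ v :: q -> p != [::] ->
  exists u l, [/\ [seq u <- rev p | fresh_nbrs p u != [::]] = u :: l,
    v = last u (fresh_nbrs p u), v \in fresh_nbrs p u & parent v = u].
Proof.
move=> E pne; have [u [l [E1 E2 E3]]] := dplus_next E pne.
exists u, l; split => //.
have [up _] := filter_head_mem E1; rewrite mem_rev in up.
move: E3; rewrite mem_filter => /andP[/andP[tuv vn] _].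
move: tuv; rewrite t_parentE => /orP[/andP[_ /eqP ->] //|/andP[us /eqP Ev]].
suff : parent u \in p by rewrite -Ev (negbTE vn).
apply: (mem_prefix_index E).
apply: ltn_trans (index_parent_lt perm_dplus dplus_tree_order us) _.
by rewrite (index_prefix E up) index_mem.
Qed.

Definition stack_on_path (p : seq T) :=
  forall x, x \in p -> fresh_nbrs p x != [::] -> ancestor x (last s p).

Lemma fresh_nbrs_rcons p v x : fresh_nbrs (rcons p v) x != [::] -> fresh_nbrs p x != [::].
Proof.
rewrite -!has_filter => /hasP [w wt] /andP[txw]; rewrite mem_rcons inE negb_or.
by case/andP => _ wp; apply/hasP; exists w; rewrite ?txw.
Qed.

Lemma dplus_stack k : 0 < k -> k <= #|T| -> stack_on_path (take k dplus).
Proof.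
have [sz U H] := dplus_spec.
elim: k => // k IH _ lt.
case: (posnP k) => [->|kpos].
  rewrite /stack_on_path; case: (dplus) H => //= a l -> x.
  by rewrite take0 inE => /eqP -> _; apply: ancestor_refl.
have ksz : k < size dplus by rewrite sz.
set p := take k dplus; set v := nth s dplus k.
have E : dplus = p ++ v :: drop k.+1 dplus by rewrite -(drop_nth s ksz) cat_take_drop.
have pne : p != [::] by rewrite -size_eq0 size_takel ?(ltnW ksz) // -lt0n.
have [u [l [E1 E2 E3 E4]]] := dplus_next_parent E pne.
have Up : uniq p by apply: take_uniq.
have Sp := IH kpos (ltnW lt).
rewrite (take_nth s ksz) -/p -/v => x; rewrite mem_rcons inE last_rcons.
case/orP=> [/eqP -> _|xp /fresh_nbrs_rcons cx]; first exact: ancestor_refl.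
have [up cu] := filter_head_mem E1; rewrite mem_rev in up.
have Hx := Sp x xp cx; have Hu := Sp u up cu.
case/orP: (ancestor_total Hx Hu) => H1.
  by rewrite -E4 in H1; apply: ancestor_trans H1 (ancestor_parent v).
case: (x =P u) => [->|/eqP xu]; first by rewrite -E4; apply: ancestor_parent.
have := index_lt_last_filter Up E1 xp cx xu.
by rewrite -(index_prefix E xp) -(index_prefix E up) ltnNge dplus_tree_order.
Qed.

(* Otherwise the search would have backtracked past [y] before reaching [w]. *)
Lemma dplus_ancestor_next p v q y w : dplus = p ++ v :: q -> y \in p -> w \in q ->
  ancestor y w -> ancestor y v.
Proof.
move=> E yp wq Hyw.
have pne : p != [::] by case: (p) yp.
have [u [l [E1 E2 E3 E4]]] := dplus_next_parent E pne.
have wn : w \notin p by apply: (uniq_cat_notin dplus_uniq E); rewrite inE wq orbT.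
have [z [zn pz Hyz Hzw]] := ancestor_exit yp wn Hyw.
have zs : z != s by apply: contraNneq zn => ->; apply: dplus_root_in_prefix E pne.
have cz : fresh_nbrs p (parent z) != [::].
  by rewrite -has_filter; apply/hasP; exists z; rewrite ?t_parentE ?zs ?eqxx ?zn.
have [up cu] := filter_head_mem E1; rewrite mem_rev in up.
have Sp : stack_on_path p.
  have -> : p = take (size p) dplus by rewrite E take_size_cat.
  apply: dplus_stack; first by rewrite lt0n size_eq0.
  by have [sz _ _] := dplus_spec; rewrite -sz E size_cat leq_addr.
have H1 := Sp _ pz cz; have H2 := Sp _ up cu.
case/orP: (ancestor_total H1 H2) => H3.
  by rewrite -E4 in H3; apply: ancestor_trans (ancestor_trans Hyz H3) (ancestor_parent v).
case: (parent z =P u) => [Ez|/eqP zu].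
  by rewrite Ez -E4 in Hyz; apply: ancestor_trans Hyz (ancestor_parent v).
have Up : uniq p by move: dplus_uniq; rewrite E cat_uniq => /andP[].
have := index_lt_last_filter Up E1 pz cz zu.
by rewrite -(index_prefix E pz) -(index_prefix E up) ltnNge dplus_tree_order.
Qed.

Lemma dplus_siblings (R : rel T) c1 c2 : pairwise R (rev tau) -> c1 != s -> c2 != s ->
  parent c1 = parent c2 -> c1 != c2 -> index c1 dplus < index c2 dplus -> R c1 c2.
Proof.
rewrite pairwise_rev => pw c1s c2s Ep c12 lt.
have E := split_at_index (mem_dplus c1).
set p := take (index c1 dplus) dplus in E.
have pne : p != [::].
  apply: contra_neq c1s => p0; move: E; rewrite p0 /= => E.
  by have [_ _ H] := dplus_spec; rewrite E /= in H.
have [u [l [E1 E2 E3 E4]]] := dplus_next_parent E pne.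
have c2n : c2 \notin p by rewrite /p in_take ?mem_dplus // -leqNgt ltnW.
have c2in : c2 \in fresh_nbrs p u by rewrite mem_filter t_parentE c2s -Ep E4 eqxx c2n mem_tau.
have pwc : pairwise (fun x y => R y x) (fresh_nbrs p u) by apply: pairwise_filter.
move: E2 c2in pwc; case/lastP: (fresh_nbrs p u) => [|l' x] //; rewrite last_rcons => <-.
rewrite mem_rcons inE eq_sym (negbTE c12) /= pairwise_rcons.
by move=> c2l /andP[/allP /(_ _ c2l)].
Qed.

Section SortedSiblings.
Hypothesis tau_siblings : pairwise sibling_first (rev tau).
Variable sg : seq T.
Hypothesis sg_lexdfs : lexdfs_from e s sg.
Hypothesis sg_ltree : t =2 ltree e sg.

Lemma dplus_chain_le v w : v != s -> index v dplus < index w dplus ->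
  chain_le (parent v) w v.
Proof.
move=> vs ivw; set u := parent v.
have iuv : index u dplus < index v dplus := index_parent_lt perm_dplus dplus_tree_order vs.
case: (boolP (ancestor u w)) => Huw; last first.
  have [l El] := rev_ancestors u.
  rewrite /chain_le El /= parent_edge //.
  case euw: (e u w) => //.
  case/orP: (edge_ancestor euw) => H; first by rewrite H in Huw.
  by move: (dplus_tree_order H); rewrite leqNgt (ltn_trans iuv ivw).
have uw : u != w by apply: contraTneq (ltn_trans iuv ivw) => ->; rewrite ltnn.
have [c [Ec cs Hcw]] := ancestor_child Huw uw.
have Dcw := lexdfs_descendant_le sg_lexdfs sg_ltree cs Hcw; rewrite Ec in Dcw.
case: (c =P v) => [<- //|/eqP cv].
(* Were [c] before [v], it would be an ancestor of [v], hence of its own parent. *)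
have ivc : index v dplus < index c dplus.
  rewrite ltnNge leq_eqVlt negb_or; apply/andP; split.
    by apply: contra_neq cv => /(index_sg_inj perm_dplus).
  apply/negP => icv.
  have E := split_at_index (mem_dplus v).
  have cp : c \in take (index v dplus) dplus by rewrite in_take ?mem_dplus.
  have wq : w \in drop (index v dplus).+1 dplus.
    have wv : w != v by apply: contraTneq ivw => ->; rewrite ltnn.
    have : w \in dplus by apply: mem_dplus.
    by rewrite {1}E mem_cat inE in_take ?mem_dplus // ltnNge (ltnW ivw) (negbTE wv).
  have := ancestor_parent_neq (dplus_ancestor_next E cp wq Hcw) cv.
  by rewrite -/u -Ec; apply/negP; apply: not_ancestor_parent.
have vc : v != c by rewrite eq_sym.
have := dplus_siblings tau_siblings vs cs (esym Ec) vc ivc.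
by rewrite /sibling_first vs cs -/u Ec eqxx /=; apply: profile_le_trans Dcw.
Qed.

End SortedSiblings.

Lemma dplus_lexdfs : pairwise sibling_first (rev tau) -> Ltree_of_lexdfs e t s ->
  lexdfs_from e s dplus.
Proof.
move=> sib [sg [L Ht]]; split; first exact: perm_trans perm_dplus sdfs_perm.
move=> p v q E w wq.
have U := dplus_uniq.
have vn := uniq_cat_notin U E (mem_head v q).
have wn : w \notin p by apply: uniq_cat_notin U E _; rewrite inE wq orbT.
have vq : v \notin q by move: U; rewrite E cat_uniq => /and3P[_ _ /andP[]].
have wv : w != v by apply: contraNneq vq => <-.
case: (p =P [::]) => [p0|/eqP pne].
  have [_ _ H0] := dplus_spec; rewrite E p0 /= in H0; subst v.
  by rewrite p0 /lexlabel /= (negbTE wv).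
have vs : v != s by apply: contraNneq vn => ->; apply: dplus_root_in_prefix E pne.
have ws : w != s by apply: contraNneq wn => ->; apply: dplus_root_in_prefix E pne.
have ivw : index v dplus < index w dplus.
  by rewrite E !index_cat (negbTE vn) (negbTE wn) /= eqxx eq_sym (negbTE wv) ltn_add2l.
rewrite (lexle_lexlabel _ _ ws vs) (profile_le_prefix perm_dplus dplus_tree_order E vs wq).
  exact: (dplus_chain_le sib L Ht vs ivw).
by move=> y yp; apply: dplus_ancestor_next E yp wq.
Qed.

Lemma dplus_ltree : lexdfs_order e dplus -> Ltree_of_lexdfs e t s.
Proof.
case=> s' L; have [sz _ H0] := dplus_spec.
have Es : s' = s.
  move: (lexdfs_head L) H0 card_gt0; rewrite -sz.
  by case: dplus => [|a l] //= <- <-.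
subst s'; exists dplus; split => //.
exact: ltree_tree_order perm_dplus dplus_tree_order H0.
Qed.

End DFSPlus.

Lemma ordering_dfs_plus (rho bfs : seq T) : vorder rho -> last s rho = s ->
  bfs_order t bfs -> head s bfs = s ->
  exists2 tau, ordering e t s rho (rev bfs) = dfs_plus t tau &
    [/\ forall x, x \in tau, last s tau = s & pairwise sibling_first (rev tau)].
Proof.
move=> rhoP rhoL bfsP bfsH.
have [r' Er] : exists r', rev rho = s :: r'.
  move: rhoP rhoL; case/lastP: rho => [|r a] P L.
    by have := perm_mem P s; rewrite mem_enum.
  by exists (rev r); rewrite rev_rcons -L last_rcons.
set beta := rev bfs.
set Q := foldl (fun Q v => refine Q (back_nbrs beta v)) [:: setT] beta.
set ord := flatten [seq [seq x <- rev rho | x \in A]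
                   | A : {set T} <- [set s] :: [seq A <- Q | A != [set s]]].
have RQ : refines Q [seq back_nbrs beta x | x <- beta].
  exact: (refines_foldl _ beta (refines_setT T)).
exists (rev ord) => //; split.
- move=> x; rewrite mem_rev; apply/flatten_mapP.
  case: (x =P s) => [->|/eqP xs].
    by exists [set s]; rewrite ?mem_head // Er /= inE eqxx mem_head.
  case: RQ => _ _ /(_ x) /hasP [A AQ xA].
  exists A; last by rewrite mem_filter xA mem_rev (perm_mem rhoP) mem_enum.
  rewrite inE mem_filter AQ andbT; apply/orP; right.
  by apply: contraTneq xA => ->; rewrite inE.
- by rewrite last_rev /ord /= Er /= inE eqxx.
- rewrite revK; apply: sub_pairwise (part_le_blocks s rho RQ) => a b Hab.
  apply/implyP => aS; apply/implyP => bS; apply/implyP => /eqP Ep.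
  by move: Hab; rewrite aS bS; apply: (part_le_siblings bfsP bfsH aS bS Ep).
Qed.

End DFSTree.

Theorem theorem7 (T : finType) (e t : rel T) (s : T) (rho bfs : seq T) :
  symmetric e -> irreflexive e -> (forall x y, connect e x y) ->
  spanning_tree e t ->
  Ltree_of_dfs e t s ->
  vorder rho -> last s rho = s ->
  bfs_order t bfs -> head s bfs = s ->
  (Ltree_of_lexdfs e t s <-> lexdfs_order e (ordering e t s rho (rev bfs))).
Proof.
move=> e_sym _ e_conn [_ [_ [t_conn _]]] [sdfs [[sdfs_perm sdfs_dfs] sdfs_head sdfs_ltree]].
move=> rhoP rhoL bfsP bfsH.
have [tau -> [mem_tau tau_last sorted_tau]] := ordering_dfs_plus e_sym e_conn t_conn
  sdfs_perm sdfs_head sdfs_dfs sdfs_ltree rhoP rhoL bfsP bfsH.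
rewrite (dfs_plusE t mem_tau tau_last); split.
- by exists s; apply: (dplus_lexdfs e_sym e_conn t_conn sdfs_perm sdfs_head sdfs_dfs
    sdfs_ltree mem_tau sorted_tau).
- exact: (dplus_ltree e_sym e_conn t_conn sdfs_perm sdfs_head sdfs_dfs sdfs_ltree mem_tau).
Qed.
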